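(* Let $k$ be a commutative ring containing $1/2$, let $R$ be a smooth commutative $k$-algebra such that $\mathrm{Der}_k(R)$ is free with a basis $\tau_1,\dots,\tau_n$ of pairwise commuting derivations, and let $g=(g^{ij})\in GL_n(R)$ be such that the derivations $\tau'_i=g^{ij}\tau_j$ pairwise commute. Let $A=(g^{-1})^{t}$, i.e. $A^{\alpha\beta}=(g^{-1})^{\beta\alpha}$ (the matrix expressing the basis of $1$-forms dual to $(\tau'_i)$ in terms of the basis dual to $(\tau_i)$). With summation over repeated indices define $$h_\Omega^{ij}=\tau_p\tau_j(g^{ip})+\tfrac12\,\tau_q(g^{ip})\,\tau_p(g^{rq})\,(g^{-1})^{jr},$$ $$g^{i\alpha\gamma}=g^{iq}\tau_q\big((A^{-1})^{\alpha\mu}\big)A^{\mu\gamma},\qquad h_E^{ij}=\tau_j(g^{i\nu\nu})+\tfrac12\,g^{iq}\tau_j\big((A^{-1})^{\mu\beta}\big)A^{\beta\gamma}\tau_q\big((A^{-1})^{\gamma\nu}\big)A^{\nu\mu}.$$ Then $h^{ij}:=h_\Omega^{ij}-h_E^{ij}=0$ for all $i,j$.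
   Context: $(g^{-1})^{jr}$ is the $(j,r)$ entry of $g^{-1}$. Repeated indices are summed. *)

From HB Require Import structures.
From mathcomp Require Import all_boot all_order all_algebra.
From mathcomp Require Import mpoly.
Set Implicit Arguments. Unset Strict Implicit. Unset Printing Implicit Defensive.
Import GRing.Theory.
Local Open Scope ring_scope.

Definition kalg_hom (k : comNzRingType) (A B : comAlgType k) (f : A -> B) : Prop :=
  [/\ (forall x y, f (x + y) = f x + f y),
      (forall x y, f (x * y) = f x * f y),
      f 1 = 1 &
      (forall (c : k) x, f (c *: x) = c *: f x)].

(* Formal smoothness: lifting property along surjections with square-zero
   kernel (C plays the role of B/I with I^2 = 0). *)
Definition formally_smooth (k : comNzRingType) (R : comAlgType k) : Prop :=
  forall (B C : comAlgType k) (pi : B -> C),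
    kalg_hom pi -> (forall c, exists b, pi b = c) ->
    (forall x y, pi x = 0 -> pi y = 0 -> x * y = 0) ->
    forall f : R -> C, kalg_hom f ->
      exists f' : R -> B, kalg_hom f' /\ (forall r, pi (f' r) = f r).

Definition finitely_presented (k : comNzRingType) (R : comAlgType k) : Prop :=
  exists (m : nat) (phi : {mpoly k[m]} -> R) (s : seq {mpoly k[m]}),
    [/\ kalg_hom phi,
        (forall r, exists p, phi p = r) &
        (forall p, phi p = 0 <->
           exists c : 'I_(size s) -> {mpoly k[m]},
             p = \sum_(i < size s) c i * s`_i)].

Definition smooth (k : comNzRingType) (R : comAlgType k) : Prop :=
  finitely_presented R /\ formally_smooth R.

Definition is_derivation (k : comNzRingType) (R : comAlgType k) (D : R -> R) : Prop :=
  [/\ (forall x y, D (x + y) = D x + D y),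
      (forall (c : k) x, D (c *: x) = c *: D x) &
      (forall x y, D (x * y) = D x * y + x * D y)].

Definition tau' (k : comNzRingType) (R : comAlgType k) (n : nat)
  (tau : 'I_n -> R -> R) (g : 'M[R]_n) (i : 'I_n) : R -> R :=
  fun x => \sum_(j < n) g i j * tau j x.

Definition h_Omega (k : comNzRingType) (half : k) (R : comAlgType k) (n : nat)
  (tau : 'I_n -> R -> R) (g ginv : 'M[R]_n) (i j : 'I_n) : R :=
  \sum_(p < n) tau p (tau j (g i p))
  + half *: (\sum_(p < n) \sum_(q < n) \sum_(r < n)
               tau q (g i p) * tau p (g r q) * ginv j r).

Definition g3 (k : comNzRingType) (R : comAlgType k) (n : nat)
  (tau : 'I_n -> R -> R) (g A Ainv : 'M[R]_n) (i al ga : 'I_n) : R :=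
  \sum_(q < n) \sum_(mu < n) g i q * tau q (Ainv al mu) * A mu ga.

Definition h_E (k : comNzRingType) (half : k) (R : comAlgType k) (n : nat)
  (tau : 'I_n -> R -> R) (g A Ainv : 'M[R]_n) (i j : 'I_n) : R :=
  \sum_(nu < n) tau j (g3 tau g A Ainv i nu nu)
  + half *: (\sum_(q < n) \sum_(mu < n) \sum_(be < n) \sum_(ga < n) \sum_(nu < n)
       g i q * tau j (Ainv mu be) * A be ga * tau q (Ainv ga nu) * A nu mu).

(** The identity holds term by term: the second-order parts and the
    [1/2]-parts of [h_Omega] and [h_E] agree separately.  Commutation of
    the [tau'_i = g^{ij} tau_j], given independence and commutation of the
    [tau], amounts to the symmetry [tau'_i (g^{jc}) = tau'_j (g^{ic})].
    Together with [tau_p = (g^{-1})^{pi} tau'_i] it turns the tensor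
    [g^{iac}] (where [A^{-1} = g^T]) into [tau_c (g^{ia})], and makes
    [(g^{-1})^{jr} tau_p (g^{rq})] symmetric in [j, p], which matches the
    quadratic parts. *)
From HB Require Import structures.
From mathcomp Require Import all_boot all_order all_algebra.
From mathcomp Require Import mpoly.
From mathcomp Require Import ring.
Set Implicit Arguments.
Unset Strict Implicit.
Unset Printing Implicit Defensive.
Import GRing.Theory.
Local Open Scope ring_scope.

Section Derivation.
Variables (k : comNzRingType) (R : comAlgType k) (D : R -> R).
Hypothesis D_der : is_derivation D.

Lemma derivationD x y : D (x + y) = D x + D y.
Proof. by case: D_der. Qed.

Lemma derivationM x y : D (x * y) = D x * y + x * D y.
Proof. by case: D_der. Qed.

Lemma derivation_sum (I : Type) (r : seq I) (P : pred I) (F : I -> R) :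
  D (\sum_(i <- r | P i) F i) = \sum_(i <- r | P i) D (F i).
Proof.
have D0 : D 0 = 0.
  by apply: (addrI (D 0)); rewrite -derivationD !addr0.
exact: (big_morph D derivationD D0).
Qed.

End Derivation.

Section CommutingFrame.
Variables (k : comNzRingType) (R : comAlgType k) (n : nat).
Variable tau : 'I_n -> R -> R.
Hypothesis tau_der : forall i, is_derivation (tau i).
Hypothesis tau_indep : forall c : 'I_n -> R,
  (forall x, \sum_(q < n) c q * tau q x = 0) -> forall q, c q = 0.
Hypothesis tau_comm : forall i j x, tau i (tau j x) = tau j (tau i x).
Variable g : 'M[R]_n.
Hypothesis tau'_comm : forall i j x,
  tau' tau g i (tau' tau g j x) = tau' tau g j (tau' tau g i x).
Variable ginv : 'M[R]_n.
Hypothesis mulVg : ginv *m g = 1%:M.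

Local Notation "''D_' i" := (tau' tau g i) (at level 8, i at level 2).

Lemma tau'_tau'E i j x :
  'D_i ('D_j x) = \sum_(c < n) 'D_i (g j c) * tau c x
                  + \sum_(a < n) \sum_(b < n) g i a * g j b * tau a (tau b x).
Proof.
transitivity (\sum_(a < n) \sum_(b < n)
   (g i a * tau a (g j b) * tau b x + g i a * g j b * tau a (tau b x))).
  apply: eq_bigr => a _; rewrite (derivation_sum (tau_der a)) mulr_sumr.
  by apply: eq_bigr => b _; rewrite (derivationM (tau_der a)) /= mulrDr !mulrA.
under eq_bigr => a _ do rewrite big_split; rewrite big_split; congr (_ + _).
by rewrite exchange_big; apply: eq_bigr => c _; rewrite mulr_suml.
Qed.

Lemma tau'_g_sym i j c : 'D_i (g j c) = 'D_j (g i c).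
Proof.
apply/eqP; rewrite -subr_eq0; apply/eqP; move: c.
apply: (@tau_indep (fun c => 'D_i (g j c) - 'D_j (g i c))) => x.
have := tau'_comm i j x; rewrite !tau'_tau'E.
have -> : \sum_(a < n) \sum_(b < n) g j a * g i b * tau a (tau b x) =
          \sum_(a < n) \sum_(b < n) g i a * g j b * tau a (tau b x).
  rewrite exchange_big; apply: eq_bigr => a _; apply: eq_bigr => b _.
  by rewrite tau_comm [g j b * _]mulrC.
move/addIr=> eq_ij; under eq_bigr => q _ do rewrite mulrBl.
by rewrite sumrB eq_ij subrr.
Qed.

Lemma tau_tau'E p x : tau p x = \sum_(i < n) ginv p i * 'D_i x.
Proof.
pose v : 'cV[R]_n := \col_a tau a x.
have -> : tau p x = ((ginv *m g) *m v) p 0 by rewrite mulVg mul1mx mxE.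
rewrite -mulmxA mxE; apply: eq_bigr => i _; congr (_ * _).
by rewrite mxE; apply: eq_bigr => a _; rewrite mxE.
Qed.

Lemma sum_inv_tau'_g m i c :
  \sum_(a < n) ginv m a * 'D_i (g a c) = tau m (g i c).
Proof. by rewrite tau_tau'E; apply: eq_bigr => a _; rewrite tau'_g_sym. Qed.

Lemma inv_tau_g_sym j p q :
  \sum_(r < n) ginv j r * tau p (g r q) = \sum_(r < n) ginv p r * tau j (g r q).
Proof.
have expand j' p' : \sum_(r < n) ginv j' r * tau p' (g r q) =
    \sum_(r < n) \sum_(s < n) ginv j' r * ginv p' s * 'D_s (g r q).
  apply: eq_bigr => r _; rewrite tau_tau'E mulr_sumr.
  by apply: eq_bigr => s _; rewrite /= mulrA.
rewrite !expand exchange_big; apply: eq_bigr => r _; apply: eq_bigr => s _.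
by rewrite tau'_g_sym [ginv p r * _]mulrC.
Qed.

Lemma g3E i a c : g3 tau g ginv^T g^T i a c = tau c (g i a).
Proof.
rewrite -sum_inv_tau'_g /g3 exchange_big; apply: eq_bigr => m _.
rewrite mulr_sumr; apply: eq_bigr => q _.
by rewrite /= !mxE mulrC.
Qed.

Variable half : k.

Lemma h_OmegaE i j :
  h_Omega half tau g ginv i j =
  \sum_(p < n) tau p (tau j (g i p))
  + half *: (\sum_(m < n) \sum_(b < n) \sum_(c < n)
               tau j (g b m) * ginv c b * tau m (g i c)).
Proof.
rewrite /h_Omega; congr (_ + half *: _).
transitivity (\sum_(p < n) \sum_(q < n)
                tau q (g i p) * \sum_(r < n) ginv p r * tau j (g r q)).
  apply: eq_bigr => p _; apply: eq_bigr => q _.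
  rewrite -inv_tau_g_sym mulr_sumr; apply: eq_bigr => r _.
  by rewrite /= [ginv j r * _]mulrC mulrA.
rewrite exchange_big; apply: eq_bigr => m _.
under eq_bigr => c _ do rewrite mulr_sumr.
rewrite exchange_big; apply: eq_bigr => b _; apply: eq_bigr => c _.
by rewrite mulrC [ginv c b * _]mulrC.
Qed.

Lemma h_EE i j :
  h_E half tau g ginv^T g^T i j =
  \sum_(p < n) tau p (tau j (g i p))
  + half *: (\sum_(m < n) \sum_(b < n) \sum_(c < n)
               tau j (g b m) * ginv c b * tau m (g i c)).
Proof.
rewrite /h_E; congr (_ + half *: _).
  by apply: eq_bigr => p _; rewrite g3E tau_comm.
rewrite exchange_big; apply: eq_bigr => m _.
rewrite exchange_big; apply: eq_bigr => b _.
rewrite exchange_big; apply: eq_bigr => c _.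
rewrite -[tau m (g i c)]g3E /g3 mulr_sumr; apply: eq_bigr => q _.
rewrite mulr_sumr; apply: eq_bigr => a _.
by rewrite !mxE; ring.
Qed.

End CommutingFrame.

Theorem theorem6p4
  (k : comNzRingType) (half : k) (Hhalf : half *+ 2 = 1)
  (R : comAlgType k) (HRsmooth : smooth R)
  (n : nat) (tau : 'I_n -> R -> R)
  (Htau_der : forall i, is_derivation (tau i))
  (Htau_span : forall D : R -> R, is_derivation D ->
     exists c : 'I_n -> R, forall x, D x = \sum_(q < n) c q * tau q x)
  (Htau_indep : forall c : 'I_n -> R,
     (forall x, \sum_(q < n) c q * tau q x = 0) -> forall q, c q = 0)
  (Htau_comm : forall i j x, tau i (tau j x) = tau j (tau i x))
  (g ginv : 'M[R]_n) (Hginv_r : g *m ginv = 1%:M) (Hginv_l : ginv *m g = 1%:M)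
  (Htau'_comm : forall i j x,
     tau' tau g i (tau' tau g j x) = tau' tau g j (tau' tau g i x))
  (A Ainv : 'M[R]_n) (HA : A = ginv^T)
  (HAinv_r : A *m Ainv = 1%:M) (HAinv_l : Ainv *m A = 1%:M) :
  forall i j : 'I_n,
    h_Omega half tau g ginv i j - h_E half tau g A Ainv i j = 0.
Proof.
have Ainv_tr : Ainv = g^T.
  have A_gT : A *m g^T = 1%:M by rewrite HA -trmx_mul Hginv_r trmx1.
  by rewrite -[Ainv]mulmx1 -A_gT mulmxA HAinv_l mul1mx.
move=> i j; rewrite Ainv_tr HA.
rewrite (h_OmegaE Htau_der Htau_indep Htau_comm Htau'_comm Hginv_l).
by rewrite (h_EE Htau_der Htau_indep Htau_comm Htau'_comm Hginv_l) subrr.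
Qed.
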